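(* Let $(X,d)$ be any metric space, $x_0\in X$, $n\geq 1$. Equipped with the topology induced by the pseudometric $\rho$, $\pi_n(X,x_0)$ is a topological group, and for every $r>0$ the open ball $B_\rho(e,r)=\{a\in\pi_n(X,x_0)\mid\rho(e,a)<r\}$ is an open normal subgroup.
   Context: $\Omega^n(X,x_0)$ is the set of continuous maps $\alpha:[0,1]^n\to X$ with $\alpha(\partial[0,1]^n)=\{x_0\}$, with uniform metric $\mu(\alpha,\beta)=\sup_{t\in[0,1]^n}d(\alpha(t),\beta(t))$. For $a,b\in\pi_n(X,x_0)$, $\rho(a,b)=\inf\{\mu(\alpha,\beta)\mid\alpha\in a,\beta\in b\}$, which is a pseudometric; $e$ denotes the identity element. *)

From Stdlib Require Import Reals Lra Lia Arith ClassicalDescription.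
From Coquelicot Require Import Rbar Lub.
Open Scope R_scope.

(* points of [0,1]^n are sequences t with t i in [0,1] for i < n and t i = 0 for i >= n *)
Definition in_cube (n : nat) (t : nat -> R) : Prop :=
  forall i, ((i < n)%nat -> 0 <= t i <= 1) /\ ((n <= i)%nat -> t i = 0).

Definition cube (n : nat) : Type := {t : nat -> R | in_cube n t}.

Definition cpt {n} (t : cube n) : nat -> R := proj1_sig t.

Definition on_boundary {n} (t : cube n) : Prop :=
  exists i, (i < n)%nat /\ (cpt t i = 0 \/ cpt t i = 1).

Definition clamp_fun (n : nat) (t : nat -> R) : nat -> R :=
  fun i => if Nat.ltb i n then Rmin 1 (Rmax 0 (t i)) else 0.

Lemma clamp_in_cube n t : in_cube n (clamp_fun n t).
Proof.
  intro i; unfold clamp_fun; split; intro H.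
  - apply Nat.ltb_lt in H; rewrite H; split.
    + apply Rmin_glb; [lra | apply Rmax_l].
    + apply Rmin_l.
  - destruct (Nat.ltb_spec i n); [lia | reflexivity].
Qed.

Definition clamp (n : nat) (t : nat -> R) : cube n := exist _ (clamp_fun n t) (clamp_in_cube n t).

Definition cube_close {n} (t t' : cube n) (d : R) : Prop :=
  forall i, (i < n)%nat -> Rabs (cpt t i - cpt t' i) < d.

Definition cont_on_cube (X : Metric_Space) (n : nat) (f : cube n -> Base X) : Prop :=
  forall t eps, 0 < eps -> exists delta, 0 < delta /\
    forall t', cube_close t t' delta -> dist X (f t) (f t') < eps.

Definition cont_on_cube_I (X : Metric_Space) (n : nat) (H : cube n -> R -> Base X) : Prop :=
  forall t s, 0 <= s <= 1 -> forall eps, 0 < eps -> exists delta, 0 < delta /\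
    forall t' s', 0 <= s' <= 1 -> cube_close t t' delta -> Rabs (s - s') < delta ->
      dist X (H t s) (H t' s') < eps.

Definition is_Omega (X : Metric_Space) (x0 : Base X) (n : nat) (f : cube n -> Base X) : Prop :=
  cont_on_cube X n f /\ forall t, on_boundary t -> f t = x0.

Definition Omega (X : Metric_Space) (x0 : Base X) (n : nat) : Type :=
  {f : cube n -> Base X | is_Omega X x0 n f}.

Definition homotopic (X : Metric_Space) (x0 : Base X) (n : nat) (f g : cube n -> Base X) : Prop :=
  exists H : cube n -> R -> Base X,
    cont_on_cube_I X n H /\ (forall t, H t 0 = f t) /\ (forall t, H t 1 = g t) /\
    (forall t s, 0 <= s <= 1 -> on_boundary t -> H t s = x0).

Definition cls (X : Metric_Space) (x0 : Base X) (n : nat) (a : Omega X x0 n) : Omega X x0 n -> Prop :=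
  fun b => homotopic X x0 n (proj1_sig a) (proj1_sig b).

Definition is_class (X : Metric_Space) (x0 : Base X) (n : nat) (A : Omega X x0 n -> Prop) : Prop :=
  exists a, forall b, A b <-> cls X x0 n a b.

Definition pi_n (X : Metric_Space) (x0 : Base X) (n : nat) : Type :=
  {A : Omega X x0 n -> Prop | is_class X x0 n A}.

Definition concat (X : Metric_Space) (n : nat) (f g : cube n -> Base X) : cube n -> Base X :=
  fun t => if Rle_dec (cpt t 0) (1/2)
           then f (clamp n (fun i => if Nat.eqb i 0 then 2 * cpt t 0 else cpt t i))
           else g (clamp n (fun i => if Nat.eqb i 0 then 2 * cpt t 0 - 1 else cpt t i)).

Definition reverse (X : Metric_Space) (n : nat) (f : cube n -> Base X) : cube n -> Base X :=
  fun t => f (clamp n (fun i => if Nat.eqb i 0 then 1 - cpt t 0 else cpt t i)).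

Definition mulc (X : Metric_Space) (x0 : Base X) (n : nat) (A B : Omega X x0 n -> Prop) :
  Omega X x0 n -> Prop :=
  fun c => exists a b, A a /\ B b /\
    homotopic X x0 n (concat X n (proj1_sig a) (proj1_sig b)) (proj1_sig c).

Definition invc (X : Metric_Space) (x0 : Base X) (n : nat) (A : Omega X x0 n -> Prop) :
  Omega X x0 n -> Prop :=
  fun c => exists a, A a /\ homotopic X x0 n (reverse X n (proj1_sig a)) (proj1_sig c).

Lemma const_is_Omega X x0 n : is_Omega X x0 n (fun _ => x0).
Proof.
  split; [|reflexivity].
  intros t eps Heps; exists 1; split; [lra|]; intros t' _.
  replace (dist X x0 x0) with 0; [exact Heps|].
  symmetry; apply (proj2 (dist_refl X x0 x0)); reflexivity.
Qed.

Definition const_loop X x0 n : Omega X x0 n := exist _ (fun _ => x0) (const_is_Omega X x0 n).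

Lemma cls_is_class X x0 n a : is_class X x0 n (cls X x0 n a).
Proof. exists a; intro b; tauto. Qed.

(* group operations on pi_n (well-definedness is part of the main theorem; the
   fallback branches are never used when the product/inverse is a class) *)
Definition pe X x0 n : pi_n X x0 n := exist _ _ (cls_is_class X x0 n (const_loop X x0 n)).

Definition pmul X x0 n (a b : pi_n X x0 n) : pi_n X x0 n :=
  match excluded_middle_informative (is_class X x0 n (mulc X x0 n (proj1_sig a) (proj1_sig b))) with
  | left p => exist _ _ p
  | right _ => a
  end.

Definition pinv X x0 n (a : pi_n X x0 n) : pi_n X x0 n :=
  match excluded_middle_informative (is_class X x0 n (invc X x0 n (proj1_sig a))) with
  | left p => exist _ _ p
  | right _ => a
  end.

Definition mu X x0 n (f g : Omega X x0 n) : Rbar :=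
  Rbar_lub (fun r => exists t, r = Finite (dist X (proj1_sig f t) (proj1_sig g t))).

Definition rho X x0 n (a b : pi_n X x0 n) : Rbar :=
  Rbar_glb (fun m => exists f g, proj1_sig a f /\ proj1_sig b g /\ m = mu X x0 n f g).

Definition rho_ball X x0 n (a : pi_n X x0 n) (r : R) : pi_n X x0 n -> Prop :=
  fun b => Rbar_lt (rho X x0 n a b) (Finite r).

Definition rho_open X x0 n (U : pi_n X x0 n -> Prop) : Prop :=
  forall a, U a -> exists r, 0 < r /\ forall b, rho_ball X x0 n a r b -> U b.

Definition prod_open {G : Type} (opn : (G -> Prop) -> Prop) (U : G * G -> Prop) : Prop :=
  forall p, U p -> exists V W, opn V /\ opn W /\ V (fst p) /\ W (snd p) /\
    forall a b, V a -> W b -> U (a, b).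

Record is_topological_group {G : Type} (mul : G -> G -> G) (inv : G -> G) (e : G)
    (opn : (G -> Prop) -> Prop) : Prop := {
  tg_assoc : forall a b c, mul a (mul b c) = mul (mul a b) c;
  tg_mul1g : forall a, mul e a = a;
  tg_mulg1 : forall a, mul a e = a;
  tg_mulVg : forall a, mul (inv a) a = e;
  tg_mulgV : forall a, mul a (inv a) = e;
  tg_mul_cont : forall W, opn W -> prod_open opn (fun p => W (mul (fst p) (snd p)));
  tg_inv_cont : forall W, opn W -> opn (fun a => W (inv a))
}.

Definition is_open_normal_subgroup {G : Type} (mul : G -> G -> G) (inv : G -> G) (e : G)
    (opn : (G -> Prop) -> Prop) (H : G -> Prop) : Prop :=
  opn H /\ H e /\ (forall a b, H a -> H b -> H (mul a b)) /\ (forall a, H a -> H (inv a)) /\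
  (forall g h, H h -> H (mul (mul g h) (inv g))).

From Stdlib Require Import Reals Lra Classical ClassicalDescription.
From Stdlib Require Import FunctionalExtensionality PropExtensionality ProofIrrelevance.
From Coquelicot Require Import Rbar Lub.
Open Scope R_scope.

(* Each group law of pi_n holds because its two sides differ by a piecewise-linear
   reparametrisation of the first coordinate, and two reparametrisations with the same
   values at 0 and 1 are joined by a straight-line homotopy.  Concatenation and reversal
   act pointwise on loops, so they do not increase the uniform distance:
   rho(ab, a'b') <= max(rho(a,a'), rho(b,b')) and rho(a^-1, b^-1) <= rho(a,b).
   In any group, reflexive relations "rho(a,b) < r" with these two properties make
   multiplication and inversion map r-balls into r-balls and make the r-balls transitive,
   hence open; the ball around e is then a subgroup, normal because
   rho(g h g^-1, g e g^-1) <= rho(h, e). *)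

Section BallTopology.

Variables (G : Type) (mul : G -> G -> G) (inv : G -> G) (e : G) (ball : G -> R -> G -> Prop).
Hypotheses (mulA : forall a b c, mul a (mul b c) = mul (mul a b) c)
  (mul1g : forall a, mul e a = a) (mulg1 : forall a, mul a e = a)
  (mulVg : forall a, mul (inv a) a = e) (mulgV : forall a, mul a (inv a) = e).
Hypotheses (ball_refl : forall a r, 0 < r -> ball a r a)
  (ball_mul : forall a a' b b' r, ball a r a' -> ball b r b' -> ball (mul a b) r (mul a' b'))
  (ball_inv : forall a a' r, ball a r a' -> ball (inv a) r (inv a')).

Definition ball_open (U : G -> Prop) : Prop :=
  forall a, U a -> exists r, 0 < r /\ forall b, ball a r b -> U b.

Lemma inv1 : inv e = e.
Proof. rewrite <- (mulg1 (inv e)); apply mulVg. Qed.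

Lemma ball_trans a b c r : 0 < r -> ball a r b -> ball b r c -> ball a r c.
Proof.
  intros Hr Hab Hbc.
  assert (Hbb : ball (mul a (inv b)) r e).
  { rewrite <- (mulgV b); apply ball_mul; [exact Hab | apply ball_refl; exact Hr]. }
  replace a with (mul (mul a (inv b)) b) by (rewrite <- mulA, mulVg; apply mulg1).
  rewrite <- (mul1g c); apply ball_mul; [exact Hbb | exact Hbc].
Qed.

Lemma ball_is_open a r : 0 < r -> ball_open (ball a r).
Proof.
  intros Hr b Hb; exists r; split; [exact Hr |].
  intros c; apply (ball_trans a b c r); auto.
Qed.

Lemma ball_topological_group : is_topological_group mul inv e ball_open.
Proof.
  constructor; auto.
  - intros W HW [a b] Hab; simpl in Hab.
    destruct (HW _ Hab) as [r [Hr HrW]].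
    exists (ball a r), (ball b r).
    repeat split; try apply ball_is_open; try apply ball_refl; auto.
  - intros W HW a Ha.
    destruct (HW _ Ha) as [r [Hr HrW]].
    exists r; split; auto.
Qed.

Lemma ball_open_normal_subgroup r :
  0 < r -> is_open_normal_subgroup mul inv e ball_open (ball e r).
Proof.
  intros Hr; repeat split.
  - apply ball_is_open; exact Hr.
  - apply ball_refl; exact Hr.
  - intros a b Ha Hb; rewrite <- (mul1g e); apply ball_mul; auto.
  - intros a Ha; rewrite <- inv1; apply ball_inv; exact Ha.
  - intros g h Hh; rewrite <- (mulgV g), <- (mulg1 g) at 1.
    apply ball_mul; [apply ball_mul |]; auto.
Qed.

End BallTopology.

Definition clip01 (x : R) : R := Rmin 1 (Rmax 0 x).

Lemma clip01_lip x y : Rabs (clip01 x - clip01 y) <= Rabs (x - y).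
Proof.
  unfold clip01, Rmin, Rmax; repeat destruct Rle_dec; unfold Rabs; repeat destruct Rcase_abs; lra.
Qed.

Lemma clip01_id x : 0 <= x <= 1 -> clip01 x = x.
Proof. unfold clip01, Rmin, Rmax; intros; repeat destruct Rle_dec; lra. Qed.

Lemma clip01_range x : 0 <= clip01 x <= 1.
Proof. unfold clip01, Rmin, Rmax; repeat destruct Rle_dec; lra. Qed.

Definition lerp (p q a : R) : R := p + a * (q - p).

Lemma lerp_dist p p' q q' a a' : 0 <= a <= 1 -> 0 <= p' <= 1 -> 0 <= q' <= 1 ->
  Rabs (lerp p q a - lerp p' q' a') <= Rmax (Rabs (p - p')) (Rabs (q - q')) + Rabs (a - a').
Proof.
  intros Ha Hp Hq; unfold lerp.
  replace (p + a * (q - p) - (p' + a' * (q' - p')))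
    with ((1 - a) * (p - p') + a * (q - q') + (a - a') * (q' - p')) by ring.
  set (M := Rmax (Rabs (p - p')) (Rabs (q - q'))).
  assert (Hpm : Rabs (p - p') <= M) by apply Rmax_l.
  assert (Hqm : Rabs (q - q') <= M) by apply Rmax_r.
  assert (Hd : Rabs (q' - p') <= 1) by (unfold Rabs; destruct Rcase_abs; lra).
  eapply Rle_trans; [apply Rabs_triang |]; apply Rplus_le_compat.
  - eapply Rle_trans; [apply Rabs_triang |].
    rewrite !Rabs_mult, (Rabs_pos_eq (1 - a)), (Rabs_pos_eq a) by lra; nra.
  - rewrite Rabs_mult; pose proof (Rabs_pos (a - a')); nra.
Qed.

Lemma Rbar_glb_lt (E : Rbar -> Prop) (r : R) :
  Rbar_lt (Rbar_glb E) r <-> exists x, E x /\ Rbar_lt x r.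
Proof.
  destruct (Rbar_ex_glb E) as [l [Hlb Hgreatest]] eqn:Hl.
  unfold Rbar_glb; rewrite Hl; simpl; split.
  - intros Hlt; apply NNPP; intros Hno.
    apply (Rbar_lt_not_le _ _ Hlt), Hgreatest.
    intros x Hx; apply Rbar_not_lt_le; intros Hxr; apply Hno; exists x; auto.
  - intros [x [Hx Hxr]]; exact (Rbar_le_lt_trans _ _ _ (Hlb x Hx) Hxr).
Qed.

Lemma Rbar_lub_lt (E : Rbar -> Prop) (r : R) :
  Rbar_lt (Rbar_lub E) r <-> exists m, m < r /\ forall x, E x -> Rbar_le x m.
Proof.
  destruct (Rbar_ex_lub E) as [l [Hub Hleast]] eqn:Hl.
  unfold Rbar_lub; rewrite Hl; simpl; split.
  - destruct l as [l | |]; simpl; intros Hlt; try contradiction.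
    + exists l; split; [exact Hlt | exact Hub].
    + exists (r - 1); split; [lra |]; intros x Hx.
      eapply Rbar_le_trans; [apply Hub, Hx | exact I].
  - intros [m [Hm Hbound]]; exact (Rbar_le_lt_trans _ _ (Finite r) (Hleast m Hbound) Hm).
Qed.

Section Loops.

Variable n : nat.
Hypothesis n_pos : (0 < n)%nat.

Lemma cpt_range (t : cube n) i : (i < n)%nat -> 0 <= cpt t i <= 1.
Proof. destruct t as [t Ht]; intros Hi; exact (proj1 (Ht i) Hi). Qed.

Lemma cpt_clamp u i : (i < n)%nat -> cpt (clamp n u) i = clip01 (u i).
Proof.
  intros Hi; unfold cpt, clamp, clamp_fun; simpl; apply Nat.ltb_lt in Hi; rewrite Hi; reflexivity.
Qed.

Lemma cube_eq (t t' : cube n) : (forall i, (i < n)%nat -> cpt t i = cpt t' i) -> t = t'.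
Proof.
  destruct t as [t Ht], t' as [t' Ht']; simpl; intros H.
  assert (E : t = t').
  { apply functional_extensionality; intros i.
    destruct (Nat.lt_ge_cases i n) as [Hi | Hi]; auto.
    rewrite (proj2 (Ht i) Hi), (proj2 (Ht' i) Hi); reflexivity. }
  subst; f_equal; apply proof_irrelevance.
Qed.

Lemma clamp_cpt (t : cube n) : clamp n (cpt t) = t.
Proof. apply cube_eq; intros i Hi; rewrite cpt_clamp by exact Hi; apply clip01_id, cpt_range, Hi. Qed.

Lemma clamp_ext u v : (forall i, (i < n)%nat -> clip01 (u i) = clip01 (v i)) -> clamp n u = clamp n v.
Proof. intros H; apply cube_eq; intros i Hi; rewrite !cpt_clamp; auto. Qed.

Definition set_first (u : nat -> R) (x : R) : nat -> R := fun i => if Nat.eqb i 0 then x else u i.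

Definition with_first (t : cube n) (x : R) : cube n := clamp n (set_first (cpt t) x).

Lemma cpt_with_first t x : 0 <= x <= 1 -> cpt (with_first t x) 0 = x.
Proof. intros Hx; unfold with_first; rewrite cpt_clamp by exact n_pos; apply clip01_id, Hx. Qed.

Lemma cpt_with_first_other t x i : (i < n)%nat -> i <> 0%nat -> cpt (with_first t x) i = cpt t i.
Proof.
  intros Hi Hi0; unfold with_first, set_first; rewrite cpt_clamp by exact Hi.
  destruct (Nat.eqb_spec i 0); [contradiction | apply clip01_id, cpt_range, Hi].
Qed.

Lemma with_first_twice t x y : with_first (with_first t x) y = with_first t y.
Proof.
  apply clamp_ext; intros i Hi; unfold set_first.
  destruct (Nat.eqb_spec i 0); [reflexivity |]; f_equal; apply cpt_with_first_other; auto.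
Qed.

Lemma with_first_cpt t : with_first t (cpt t 0) = t.
Proof.
  apply cube_eq; intros i Hi; unfold with_first, set_first; rewrite cpt_clamp by exact Hi.
  destruct (Nat.eqb_spec i 0); subst; apply clip01_id, cpt_range, Hi.
Qed.

Lemma on_boundary_set_first u x : x = 0 \/ x = 1 -> on_boundary (clamp n (set_first u x)).
Proof.
  intros Hx; exists 0%nat; split; [exact n_pos |].
  rewrite cpt_clamp by exact n_pos; unfold set_first; simpl.
  destruct Hx as [-> | ->]; [left | right]; apply clip01_id; lra.
Qed.

Lemma on_boundary_with_first t x : x = 0 \/ x = 1 -> on_boundary (with_first t x).
Proof. apply on_boundary_set_first. Qed.

Lemma on_boundary_cases t : on_boundary t ->
  cpt t 0 = 0 \/ cpt t 0 = 1 \/ forall x, on_boundary (with_first t x).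
Proof.
  intros [i [Hi Hb]]; destruct (Nat.eq_dec i 0) as [-> | Hi0]; [tauto |].
  right; right; intros x; exists i; split; [exact Hi |].
  rewrite cpt_with_first_other; auto.
Qed.

Lemma cube_ext_first {Y : Type} (F F' : cube n -> Y) :
  (forall t x, 0 <= x <= 1 -> F (with_first t x) = F' (with_first t x)) -> F = F'.
Proof.
  intros H; apply functional_extensionality; intros t.
  rewrite <- (with_first_cpt t); apply H, cpt_range, n_pos.
Qed.

(** * Joint continuity in a point of R^n and a parameter *)

(* Maps on the cube are handled through their extensions to all of [nat -> R]
   (precomposition with [clamp]), so that coordinate changes such as [x |-> 2x - 1]
   need no range side conditions. *)

Definition seq_close (u v : nat -> R) (d : R) : Prop :=
  forall i, (i < n)%nat -> Rabs (u i - v i) < d.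

Lemma seq_close_Rmin u v a b : seq_close u v (Rmin a b) -> seq_close u v a /\ seq_close u v b.
Proof. intros H; split; intros i Hi; apply (Rmin_Rgt a b), H, Hi. Qed.

Lemma seq_close_clamp u v d : seq_close u v d -> cube_close (clamp n u) (clamp n v) d.
Proof.
  intros H i Hi; rewrite !cpt_clamp by exact Hi.
  eapply Rle_lt_trans; [apply clip01_lip | apply H, Hi].
Qed.

Definition jcont_real (h : (nat -> R) -> R -> R) : Prop :=
  forall u s eps, 0 < eps -> exists delta, 0 < delta /\ forall u' s',
    seq_close u u' delta -> Rabs (s - s') < delta -> Rabs (h u s - h u' s') < eps.

Definition jcont_seq (w : (nat -> R) -> R -> nat -> R) : Prop :=
  forall u s eps, 0 < eps -> exists delta, 0 < delta /\ forall u' s',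
    seq_close u u' delta -> Rabs (s - s') < delta -> seq_close (w u s) (w u' s') eps.

Lemma jcont_real_lip h L : 0 <= L ->
  (forall u s u' s', Rabs (h u s - h u' s') <= L * (Rabs (u 0%nat - u' 0%nat) + Rabs (s - s'))) ->
  jcont_real h.
Proof.
  intros HL Hlip u s eps Heps; exists (eps / (2 * L + 2)); split; [apply Rdiv_lt_0_compat; lra |].
  intros u' s' Hu Hs; specialize (Hu 0%nat n_pos).
  eapply Rle_lt_trans; [apply Hlip |].
  set (d := eps / (2 * L + 2)) in *.
  assert (Hd : d * (2 * L + 2) = eps) by (unfold d; field; lra).
  pose proof (Rabs_pos (u 0%nat - u' 0%nat)); pose proof (Rabs_pos (s - s')); nra.
Qed.

Lemma jcont_real_first : jcont_real (fun u _ => u 0%nat).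
Proof.
  apply jcont_real_lip with 1; [lra |]; intros u s u' s'.
  pose proof (Rabs_pos (s - s')); lra.
Qed.

Lemma jcont_real_param : jcont_real (fun _ s => s).
Proof.
  apply jcont_real_lip with 1; [lra |]; intros u s u' s'.
  pose proof (Rabs_pos (u 0%nat - u' 0%nat)); lra.
Qed.

Lemma jcont_real_affine a b h : jcont_real h -> jcont_real (fun u s => a * h u s + b).
Proof.
  intros Hh u s eps Heps.
  destruct (Hh u s (eps / (Rabs a + 1))) as [d [Hd Hclose]];
    [apply Rdiv_lt_0_compat; pose proof (Rabs_pos a); lra |].
  exists d; split; [exact Hd |]; intros u' s' Hu Hs.
  replace (a * h u s + b - (a * h u' s' + b)) with (a * (h u s - h u' s')) by ring.
  rewrite Rabs_mult; specialize (Hclose u' s' Hu Hs).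
  assert (Hdiv : eps / (Rabs a + 1) * (Rabs a + 1) = eps) by (field; pose proof (Rabs_pos a); lra).
  pose proof (Rabs_pos a); pose proof (Rabs_pos (h u s - h u' s')); nra.
Qed.

Lemma jcont_seq_id : jcont_seq (fun u _ => u).
Proof. intros u s eps Heps; exists eps; split; auto. Qed.

Lemma jcont_set_first h : jcont_real h -> jcont_seq (fun u s => set_first u (h u s)).
Proof.
  intros Hh u s eps Heps; destruct (Hh u s eps Heps) as [d [Hd Hclose]].
  exists (Rmin d eps); split; [apply Rmin_pos; auto |].
  intros u' s' Hu Hs i Hi; apply seq_close_Rmin in Hu as [Hud Hue]; unfold set_first.
  destruct (Nat.eqb i 0); [apply Hclose; auto; apply (Rmin_Rgt d eps), Hs | apply Hue, Hi].
Qed.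

Variable X : Metric_Space.

Definition jcont (F : (nat -> R) -> R -> Base X) : Prop :=
  forall u s eps, 0 < eps -> exists delta, 0 < delta /\ forall u' s',
    seq_close u u' delta -> Rabs (s - s') < delta -> dist X (F u s) (F u' s') < eps.

Lemma jcont_of_cube f : cont_on_cube X n f -> jcont (fun u _ => f (clamp n u)).
Proof.
  intros Hf u s eps Heps; destruct (Hf (clamp n u) eps Heps) as [d [Hd Hclose]].
  exists d; split; [exact Hd |]; intros u' s' Hu _; apply Hclose, seq_close_clamp, Hu.
Qed.

Lemma jcont_of_cube_I H : cont_on_cube_I X n H -> jcont (fun u s => H (clamp n u) (clip01 s)).
Proof.
  intros HH u s eps Heps.
  destruct (HH (clamp n u) (clip01 s) (clip01_range s) eps Heps) as [d [Hd Hclose]].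
  exists d; split; [exact Hd |]; intros u' s' Hu Hs.
  apply Hclose; [apply clip01_range | apply seq_close_clamp, Hu |].
  eapply Rle_lt_trans; [apply clip01_lip | exact Hs].
Qed.

Lemma cont_on_cube_I_of_jcont H F : jcont F ->
  (forall t s, 0 <= s <= 1 -> H t s = F (cpt t) s) -> cont_on_cube_I X n H.
Proof.
  intros HF HFH t s Hs eps Heps; destruct (HF (cpt t) s eps Heps) as [d [Hd Hclose]].
  exists d; split; [exact Hd |]; intros t' s' Hs' Ht Hss; rewrite !HFH by assumption; auto.
Qed.

Lemma jcont_comp F w h : jcont F -> jcont_seq w -> jcont_real h ->
  jcont (fun u s => F (w u s) (h u s)).
Proof.
  intros HF Hw Hh u s eps Heps.
  destruct (HF (w u s) (h u s) eps Heps) as [d [Hd HFc]].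
  destruct (Hw u s d Hd) as [d1 [Hd1 Hwc]], (Hh u s d Hd) as [d2 [Hd2 Hhc]].
  exists (Rmin d1 d2); split; [apply Rmin_pos; auto |].
  intros u' s' Hu Hs; apply seq_close_Rmin in Hu as [Hu1 Hu2]; apply Rmin_Rgt in Hs as [Hs1 Hs2].
  apply HFc; [apply Hwc | apply Hhc]; auto.
Qed.

Lemma jcont_homotopy_param H a b : cont_on_cube_I X n H ->
  jcont (fun u s => H (clamp n u) (clip01 (a * s + b))).
Proof.
  intros Hc; exact (jcont_comp _ _ _ (jcont_of_cube_I H Hc) jcont_seq_id
                      (jcont_real_affine _ _ _ jcont_real_param)).
Qed.

Lemma jcont_homotopy_first H a b : cont_on_cube_I X n H ->
  jcont (fun u s => H (clamp n (set_first u (a * u 0%nat + b))) (clip01 s)).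
Proof.
  intros Hc; exact (jcont_comp _ _ _ (jcont_of_cube_I H Hc)
                      (jcont_set_first _ (jcont_real_affine _ _ _ jcont_real_first)) jcont_real_param).
Qed.

Lemma jcont_glue F1 F2 c : jcont F1 -> jcont F2 -> jcont_real c ->
  (forall u s, c u s = 1/2 -> F1 u s = F2 u s) ->
  jcont (fun u s => if Rle_dec (c u s) (1/2) then F1 u s else F2 u s).
Proof.
  intros H1 H2 Hc Hmid u s eps Heps.
  destruct (H1 u s eps Heps) as [d1 [Hd1 C1]], (H2 u s eps Heps) as [d2 [Hd2 C2]].
  destruct (Req_dec (c u s) (1/2)) as [E | E].
  - exists (Rmin d1 d2); split; [apply Rmin_pos; auto |].
    intros u' s' Hu Hs; apply seq_close_Rmin in Hu as [Hu1 Hu2]; apply Rmin_Rgt in Hs as [Hs1 Hs2].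
    destruct (Rle_dec (c u s) (1/2)) as [_ | ?]; [| lra].
    destruct (Rle_dec (c u' s') (1/2)); [auto | rewrite Hmid by exact E; auto].
  - (* close to (u, s), [c] stays on the same side of 1/2 *)
    destruct (Hc u s (Rabs (c u s - 1/2))) as [d3 [Hd3 C3]]; [apply Rabs_pos_lt; lra |].
    exists (Rmin d1 (Rmin d2 d3)); split; [repeat apply Rmin_pos; auto |].
    intros u' s' Hu Hs; apply seq_close_Rmin in Hu as [Hu1 Hu]; apply seq_close_Rmin in Hu as [Hu2 Hu3].
    apply Rmin_Rgt in Hs as [Hs1 Hs]; apply Rmin_Rgt in Hs as [Hs2 Hs3].
    specialize (C3 u' s' Hu3 Hs3); revert C3; unfold Rabs; repeat destruct Rcase_abs; intros C3;
      destruct (Rle_dec (c u s) (1/2)), (Rle_dec (c u' s') (1/2)); auto; lra.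
Qed.

(** * Homotopy relative to the boundary *)

Variable x0 : Base X.

Local Notation hom := (homotopic X x0 n).

Lemma homotopic_is_Omega f g : hom f g -> is_Omega X x0 n f.
Proof.
  intros [H [Hc [H0 [_ Hb]]]]; split.
  - intros t eps Heps; destruct (Hc t 0 ltac:(lra) eps Heps) as [d [Hd Hclose]].
    exists d; split; [exact Hd |]; intros t' Ht; rewrite <- !H0.
    apply Hclose; auto; [lra | rewrite Rminus_0_r, Rabs_R0; exact Hd].
  - intros t Ht; rewrite <- H0; apply Hb; [lra | exact Ht].
Qed.

Lemma homotopic_refl f : is_Omega X x0 n f -> hom f f.
Proof.
  intros [Hc Hb]; exists (fun t _ => f t); repeat split; auto.
  apply cont_on_cube_I_of_jcont with (fun u _ => f (clamp n u)).
  - apply jcont_of_cube, Hc.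
  - intros t s _; rewrite clamp_cpt; reflexivity.
Qed.

Lemma homotopic_sym f g : hom f g -> hom g f.
Proof.
  intros [H [Hc [H0 [H1 Hb]]]]; exists (fun t s => H t (1 - s)); repeat split.
  - apply cont_on_cube_I_of_jcont with (fun u s => H (clamp n u) (clip01 (-1 * s + 1))).
    + exact (jcont_homotopy_param H _ _ Hc).
    + intros t s Hs; rewrite clamp_cpt, clip01_id by lra; f_equal; ring.
  - intros t; rewrite Rminus_0_r; apply H1.
  - intros t; rewrite Rminus_diag; apply H0.
  - intros t s Hs Ht; apply Hb; [lra | exact Ht].
Qed.

Lemma homotopic_trans f g k : hom f g -> hom g k -> hom f k.
Proof.
  intros [H [Hc [H0 [H1 Hb]]]] [K [Kc [K0 [K1 Kb]]]].
  exists (fun t s => if Rle_dec s (1/2) then H t (2 * s) else K t (2 * s - 1)); repeat split.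
  - apply cont_on_cube_I_of_jcont with (fun u s => if Rle_dec s (1/2)
        then H (clamp n u) (clip01 (2 * s + 0)) else K (clamp n u) (clip01 (2 * s + -1))).
    + apply jcont_glue.
      * exact (jcont_homotopy_param H _ _ Hc).
      * exact (jcont_homotopy_param K _ _ Kc).
      * exact jcont_real_param.
      * intros u s Hs; rewrite !clip01_id by lra.
        replace (2 * s + 0) with 1 by lra; replace (2 * s + -1) with 0 by lra.
        rewrite H1, K0; reflexivity.
    + intros t s Hs; rewrite clamp_cpt; destruct Rle_dec; rewrite clip01_id by lra; f_equal; ring.
  - intros t; destruct Rle_dec; [rewrite Rmult_0_r; apply H0 | lra].
  - intros t; destruct Rle_dec; [lra |]; replace (2 * 1 - 1) with 1 by ring; apply K1.
  - intros t s Hs Ht; destruct Rle_dec; [apply Hb | apply Kb]; auto; lra.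
Qed.

Lemma concat_homotopic f1 f2 g1 g2 :
  hom f1 g1 -> hom f2 g2 -> hom (concat X n f1 f2) (concat X n g1 g2).
Proof.
  intros [H [Hc [H0 [H1 Hb]]]] [K [Kc [K0 [K1 Kb]]]].
  exists (fun t s => if Rle_dec (cpt t 0) (1/2) then H (with_first t (2 * cpt t 0)) s
                     else K (with_first t (2 * cpt t 0 - 1)) s); repeat split.
  - apply cont_on_cube_I_of_jcont with (fun u s => if Rle_dec (u 0%nat) (1/2)
        then H (clamp n (set_first u (2 * u 0%nat + 0))) (clip01 s)
        else K (clamp n (set_first u (2 * u 0%nat + -1))) (clip01 s)).
    + apply jcont_glue.
      * exact (jcont_homotopy_first H _ _ Hc).
      * exact (jcont_homotopy_first K _ _ Kc).
      * exact jcont_real_first.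
      * intros u s Hs; rewrite Hb, Kb; try apply clip01_range; try reflexivity;
          apply on_boundary_set_first; lra.
    + intros t s Hs; rewrite clip01_id by exact Hs.
      destruct Rle_dec; f_equal; apply (f_equal (with_first t)); ring.
  - intros t; unfold concat; destruct Rle_dec; [apply H0 | apply K0].
  - intros t; unfold concat; destruct Rle_dec; [apply H1 | apply K1].
  - intros t s Hs Ht; destruct (on_boundary_cases t Ht) as [E | [E | E]];
      destruct Rle_dec; try lra; [apply Hb | apply Kb | apply Hb | apply Kb]; auto;
      apply on_boundary_with_first; lra.
Qed.

Lemma reverse_homotopic f g : hom f g -> hom (reverse X n f) (reverse X n g).
Proof.
  intros [H [Hc [H0 [H1 Hb]]]]; exists (fun t s => H (with_first t (1 - cpt t 0)) s); repeat split.
  - apply cont_on_cube_I_of_jcont with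
        (fun u s => H (clamp n (set_first u (-1 * u 0%nat + 1))) (clip01 s)).
    + exact (jcont_homotopy_first H _ _ Hc).
    + intros t s Hs; rewrite clip01_id by exact Hs; f_equal; apply (f_equal (with_first t)); ring.
  - intros t; apply H0.
  - intros t; apply H1.
  - intros t s Hs Ht; apply Hb; [exact Hs |].
    destruct (on_boundary_cases t Ht) as [E | [E | E]]; [| | apply E];
      apply on_boundary_with_first; lra.
Qed.

Lemma concat_is_Omega f g : is_Omega X x0 n f -> is_Omega X x0 n g -> is_Omega X x0 n (concat X n f g).
Proof. intros Hf Hg; eapply homotopic_is_Omega, concat_homotopic; apply homotopic_refl; auto. Qed.

Lemma reverse_is_Omega f : is_Omega X x0 n f -> is_Omega X x0 n (reverse X n f).
Proof. intros Hf; eapply homotopic_is_Omega, reverse_homotopic, homotopic_refl, Hf. Qed.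

Lemma is_Omega_first_boundary f t c : is_Omega X x0 n f -> c = 0 \/ c = 1 -> f (with_first t c) = x0.
Proof. intros [_ Hb] Hc; apply Hb, on_boundary_with_first, Hc. Qed.

(** * Reparametrisation of the first coordinate *)

Definition reparam (f : cube n -> Base X) (phi : R -> R) : cube n -> Base X :=
  fun t => f (with_first t (phi (cpt t 0))).

Definition is_reparam (phi : R -> R) : Prop :=
  (exists L, 0 <= L /\ forall x y, Rabs (phi x - phi y) <= L * Rabs (x - y)) /\
  (forall x, 0 <= x <= 1 -> 0 <= phi x <= 1).

Lemma jcont_real_lerp phi psi : is_reparam phi -> is_reparam psi ->
  jcont_real (fun u s => lerp (phi (clip01 (u 0%nat))) (psi (clip01 (u 0%nat))) (clip01 s)).
Proof.
  intros [[Lp [HLp Hp]] Hp01] [[Lq [HLq Hq]] Hq01].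
  apply jcont_real_lip with (Lp + Lq + 1); [lra |]; intros u s u' s'.
  set (x := clip01 (u 0%nat)); set (x' := clip01 (u' 0%nat)).
  assert (Hx : Rabs (x - x') <= Rabs (u 0%nat - u' 0%nat)) by apply clip01_lip.
  assert (Hs : Rabs (clip01 s - clip01 s') <= Rabs (s - s')) by apply clip01_lip.
  eapply Rle_trans;
    [apply lerp_dist; [apply clip01_range | apply Hp01, clip01_range | apply Hq01, clip01_range] |].
  specialize (Hp x x'); specialize (Hq x x').
  pose proof (Rabs_pos (x - x')); pose proof (Rabs_pos (s - s')).
  pose proof (Rabs_pos (phi x - phi x')); pose proof (Rabs_pos (psi x - psi x')).
  apply Rmax_case_strong; intros _; nra.
Qed.

Lemma reparam_homotopic f phi psi : is_Omega X x0 n f -> is_reparam phi -> is_reparam psi ->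
  phi 0 = psi 0 -> phi 1 = psi 1 -> (phi 0 = 0 \/ phi 0 = 1) -> (phi 1 = 0 \/ phi 1 = 1) ->
  hom (reparam f phi) (reparam f psi).
Proof.
  intros Hf Hphi Hpsi E0 E1 B0 B1.
  set (h := fun u s => lerp (phi (clip01 (u 0%nat))) (psi (clip01 (u 0%nat))) (clip01 s)).
  assert (Hh0 : forall t : cube n, h (cpt t) 0 = phi (cpt t 0)).
  { intros t; unfold h, lerp; rewrite (clip01_id 0) by lra.
    rewrite (clip01_id (cpt t 0)) by (apply cpt_range, n_pos); ring. }
  assert (Hh1 : forall t : cube n, h (cpt t) 1 = psi (cpt t 0)).
  { intros t; unfold h, lerp; rewrite (clip01_id 1) by lra.
    rewrite (clip01_id (cpt t 0)) by (apply cpt_range, n_pos); ring. }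
  exists (fun t s => f (with_first t (h (cpt t) s))); repeat split.
  - apply cont_on_cube_I_of_jcont with (fun u s => f (clamp n (set_first u (h u s)))); [| reflexivity].
    exact (jcont_comp _ _ _ (jcont_of_cube f (proj1 Hf))
             (jcont_set_first _ (jcont_real_lerp phi psi Hphi Hpsi)) jcont_real_param).
  - intros t; rewrite Hh0; reflexivity.
  - intros t; rewrite Hh1; reflexivity.
  - intros t s Hs Ht; apply (proj2 Hf).
    destruct (on_boundary_cases t Ht) as [E | [E | E]]; [| | apply E];
      apply on_boundary_with_first; unfold h, lerp; rewrite E, ?(clip01_id 0), ?(clip01_id 1) by lra.
    + rewrite <- E0; replace (phi 0 + clip01 s * (phi 0 - phi 0)) with (phi 0) by ring; exact B0.
    + rewrite <- E1; replace (phi 1 + clip01 s * (phi 1 - phi 1)) with (phi 1) by ring; exact B1.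
Qed.

Lemma reparam_homotopic_self f phi : is_Omega X x0 n f -> is_reparam phi ->
  phi 0 = 0 -> phi 1 = 1 -> hom (reparam f phi) f.
Proof.
  intros Hf Hphi E0 E1.
  replace f with (reparam f (fun x => x)) at 2
    by (apply functional_extensionality; intros t; apply (f_equal f), with_first_cpt).
  apply reparam_homotopic; auto.
  split; [exists 1; split; [lra | intros; lra] | auto].
Qed.

Lemma reparam_homotopic_const f phi c : is_Omega X x0 n f -> is_reparam phi ->
  phi 0 = c -> phi 1 = c -> c = 0 \/ c = 1 -> hom (reparam f phi) (fun _ => x0).
Proof.
  intros Hf Hphi E0 E1 Hc.
  replace (fun _ : cube n => x0) with (reparam f (fun _ => c))
    by (apply functional_extensionality; intros t; apply is_Omega_first_boundary; auto).
  apply reparam_homotopic; auto; [| rewrite E0; exact Hc | rewrite E1; exact Hc].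
  split; [exists 0; split; [lra | intros; rewrite Rminus_diag, Rabs_R0; lra] | intros; destruct Hc; lra].
Qed.

Lemma reparam_with_first f phi t x : 0 <= x <= 1 ->
  reparam f phi (with_first t x) = f (with_first t (phi x)).
Proof. intros Hx; unfold reparam; rewrite cpt_with_first, with_first_twice by exact Hx; reflexivity. Qed.

Lemma concat_with_first_l f g t x : 0 <= x <= 1/2 ->
  concat X n f g (with_first t x) = f (with_first t (2 * x)).
Proof.
  intros Hx; unfold concat; rewrite cpt_with_first by lra.
  destruct Rle_dec; [| lra]; exact (f_equal f (with_first_twice t x (2 * x))).
Qed.

Lemma concat_with_first_r f g t x : 1/2 < x <= 1 ->
  concat X n f g (with_first t x) = g (with_first t (2 * x - 1)).
Proof.
  intros Hx; unfold concat; rewrite cpt_with_first by lra.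
  destruct Rle_dec; [lra |]; exact (f_equal g (with_first_twice t x (2 * x - 1))).
Qed.

Lemma reverse_with_first f t x : 0 <= x <= 1 ->
  reverse X n f (with_first t x) = f (with_first t (1 - x)).
Proof.
  intros Hx; unfold reverse; rewrite cpt_with_first by exact Hx.
  exact (f_equal f (with_first_twice t x (1 - x))).
Qed.

Ltac piecewise_linear :=
  intros; unfold Rmin, Rmax; repeat destruct Rle_dec; unfold Rabs; repeat destruct Rcase_abs; lra.

Ltac reparam_2lip := split; [exists 2; split; [lra | piecewise_linear] | piecewise_linear].

Ltac simpl_with_first := repeat first
  [ rewrite concat_with_first_l by lra | rewrite concat_with_first_r by lra
  | rewrite reverse_with_first by lra ].

Definition phi_assoc (x : R) : R := Rmin (2 * x) (Rmin (x + 1/4) ((x + 1) / 2)).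
Definition phi_lunit (x : R) : R := Rmax 0 (2 * x - 1).
Definition phi_runit (x : R) : R := Rmin 1 (2 * x).
Definition phi_rinv (x : R) : R := Rmin (2 * x) (2 - 2 * x).
Definition phi_linv (x : R) : R := Rmax (1 - 2 * x) (2 * x - 1).

Lemma concat_assoc_homotopic f g k :
  is_Omega X x0 n f -> is_Omega X x0 n g -> is_Omega X x0 n k ->
  hom (concat X n (concat X n f g) k) (concat X n f (concat X n g k)).
Proof.
  intros Hf Hg Hk; set (F := concat X n f (concat X n g k)).
  replace (concat X n (concat X n f g) k) with (reparam F phi_assoc).
  - apply reparam_homotopic_self; [apply concat_is_Omega, concat_is_Omega; auto | ..];
      unfold phi_assoc; [reparam_2lip | piecewise_linear | piecewise_linear].
  - apply cube_ext_first; intros t x Hx; rewrite reparam_with_first by exact Hx; unfold F, phi_assoc.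
    destruct (Rle_dec x (1/4)); [| destruct (Rle_dec x (1/2))].
    + replace (Rmin _ _) with (2 * x) by piecewise_linear; simpl_with_first; reflexivity.
    + replace (Rmin _ _) with (x + 1/4) by piecewise_linear; simpl_with_first.
      do 2 apply f_equal; lra.
    + replace (Rmin _ _) with ((x + 1) / 2) by piecewise_linear; simpl_with_first.
      do 2 apply f_equal; lra.
Qed.

Lemma concat_const_l_homotopic f : is_Omega X x0 n f -> hom (concat X n (fun _ => x0) f) f.
Proof.
  intros Hf; replace (concat X n (fun _ => x0) f) with (reparam f phi_lunit).
  - apply reparam_homotopic_self; auto;
      unfold phi_lunit; [reparam_2lip | piecewise_linear | piecewise_linear].
  - apply cube_ext_first; intros t x Hx; rewrite reparam_with_first by exact Hx; unfold phi_lunit.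
    destruct (Rle_dec x (1/2)).
    + replace (Rmax _ _) with 0 by piecewise_linear; simpl_with_first.
      apply is_Omega_first_boundary; auto.
    + replace (Rmax _ _) with (2 * x - 1) by piecewise_linear; simpl_with_first; reflexivity.
Qed.

Lemma concat_const_r_homotopic f : is_Omega X x0 n f -> hom (concat X n f (fun _ => x0)) f.
Proof.
  intros Hf; replace (concat X n f (fun _ => x0)) with (reparam f phi_runit).
  - apply reparam_homotopic_self; auto;
      unfold phi_runit; [reparam_2lip | piecewise_linear | piecewise_linear].
  - apply cube_ext_first; intros t x Hx; rewrite reparam_with_first by exact Hx; unfold phi_runit.
    destruct (Rle_dec x (1/2)).
    + replace (Rmin _ _) with (2 * x) by piecewise_linear; simpl_with_first; reflexivity.
    + replace (Rmin _ _) with 1 by piecewise_linear; simpl_with_first.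
      apply is_Omega_first_boundary; auto.
Qed.

Lemma concat_reverse_r_homotopic f : is_Omega X x0 n f ->
  hom (concat X n f (reverse X n f)) (fun _ => x0).
Proof.
  intros Hf; replace (concat X n f (reverse X n f)) with (reparam f phi_rinv).
  - apply reparam_homotopic_const with 0; auto;
      unfold phi_rinv; [reparam_2lip | piecewise_linear | piecewise_linear].
  - apply cube_ext_first; intros t x Hx; rewrite reparam_with_first by exact Hx; unfold phi_rinv.
    destruct (Rle_dec x (1/2)).
    + replace (Rmin _ _) with (2 * x) by piecewise_linear; simpl_with_first; reflexivity.
    + replace (Rmin _ _) with (2 - 2 * x) by piecewise_linear; simpl_with_first.
      do 2 apply f_equal; lra.
Qed.

Lemma concat_reverse_l_homotopic f : is_Omega X x0 n f ->
  hom (concat X n (reverse X n f) f) (fun _ => x0).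
Proof.
  intros Hf; replace (concat X n (reverse X n f) f) with (reparam f phi_linv).
  - apply reparam_homotopic_const with 1; auto;
      unfold phi_linv; [reparam_2lip | piecewise_linear | piecewise_linear].
  - apply cube_ext_first; intros t x Hx; rewrite reparam_with_first by exact Hx; unfold phi_linv.
    destruct (Rle_dec x (1/2)).
    + replace (Rmax _ _) with (1 - 2 * x) by piecewise_linear; simpl_with_first; reflexivity.
    + replace (Rmax _ _) with (2 * x - 1) by piecewise_linear; simpl_with_first; reflexivity.
Qed.

(** * The group [pi_n] *)

Definition Omega_concat (a b : Omega X x0 n) : Omega X x0 n :=
  exist _ (concat X n (proj1_sig a) (proj1_sig b)) (concat_is_Omega _ _ (proj2_sig a) (proj2_sig b)).

Definition Omega_reverse (a : Omega X x0 n) : Omega X x0 n :=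
  exist _ (reverse X n (proj1_sig a)) (reverse_is_Omega _ (proj2_sig a)).

Lemma cls_refl (a : Omega X x0 n) : cls X x0 n a a.
Proof. apply homotopic_refl, proj2_sig. Qed.

Lemma pi_n_inhabited (A : pi_n X x0 n) : exists a, proj1_sig A a.
Proof. destruct A as [A [a Ha]]; exists a; apply Ha, cls_refl. Qed.

Lemma pi_n_cls (A : pi_n X x0 n) a : proj1_sig A a -> forall c, proj1_sig A c <-> cls X x0 n a c.
Proof.
  destruct A as [A [a0 Ha0]]; simpl; intros Ha c; rewrite Ha0.
  apply Ha0 in Ha; unfold cls in *; split; intros Hc.
  - exact (homotopic_trans _ _ _ (homotopic_sym _ _ Ha) Hc).
  - exact (homotopic_trans _ _ _ Ha Hc).
Qed.

Lemma pi_n_eq (A B : pi_n X x0 n) a b : proj1_sig A a -> proj1_sig B b ->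
  hom (proj1_sig a) (proj1_sig b) -> A = B.
Proof.
  intros Ha Hb Hab.
  assert (E : proj1_sig A = proj1_sig B).
  { apply functional_extensionality; intros c; apply propositional_extensionality.
    rewrite (pi_n_cls A a Ha c), (pi_n_cls B b Hb c); unfold cls; split; intros Hc.
    - exact (homotopic_trans _ _ _ (homotopic_sym _ _ Hab) Hc).
    - exact (homotopic_trans _ _ _ Hab Hc). }
  destruct A as [A HA], B as [B HB]; simpl in E; subst; f_equal; apply proof_irrelevance.
Qed.

Lemma pmul_val (A B : pi_n X x0 n) :
  proj1_sig (pmul X x0 n A B) = mulc X x0 n (proj1_sig A) (proj1_sig B).
Proof.
  unfold pmul; destruct excluded_middle_informative as [Hcls | Hnot]; [reflexivity |].
  exfalso; apply Hnot.
  destruct (pi_n_inhabited A) as [a Ha], (pi_n_inhabited B) as [b Hb].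
  exists (Omega_concat a b); intros c; split.
  - intros [a' [b' [Ha' [Hb' Hc]]]]; apply (pi_n_cls A a Ha) in Ha'; apply (pi_n_cls B b Hb) in Hb'.
    exact (homotopic_trans _ _ _ (concat_homotopic _ _ _ _ Ha' Hb') Hc).
  - intros Hc; exists a, b; auto.
Qed.

Lemma pinv_val (A : pi_n X x0 n) : proj1_sig (pinv X x0 n A) = invc X x0 n (proj1_sig A).
Proof.
  unfold pinv; destruct excluded_middle_informative as [Hcls | Hnot]; [reflexivity |].
  exfalso; apply Hnot.
  destruct (pi_n_inhabited A) as [a Ha].
  exists (Omega_reverse a); intros c; split.
  - intros [a' [Ha' Hc]]; apply (pi_n_cls A a Ha) in Ha'.
    exact (homotopic_trans _ _ _ (reverse_homotopic _ _ Ha') Hc).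
  - intros Hc; exists a; auto.
Qed.

Lemma pmul_mem (A B : pi_n X x0 n) a b : proj1_sig A a -> proj1_sig B b ->
  proj1_sig (pmul X x0 n A B) (Omega_concat a b).
Proof.
  intros Ha Hb; rewrite pmul_val; exists a, b.
  split; [exact Ha | split; [exact Hb | exact (cls_refl (Omega_concat a b))]].
Qed.

Lemma pinv_mem (A : pi_n X x0 n) a : proj1_sig A a -> proj1_sig (pinv X x0 n A) (Omega_reverse a).
Proof.
  intros Ha; rewrite pinv_val; exists a; split; [exact Ha | exact (cls_refl (Omega_reverse a))].
Qed.

Lemma pe_mem : proj1_sig (pe X x0 n) (const_loop X x0 n).
Proof. apply cls_refl. Qed.

Lemma pmulA (A B C : pi_n X x0 n) :
  pmul X x0 n A (pmul X x0 n B C) = pmul X x0 n (pmul X x0 n A B) C.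
Proof.
  destruct (pi_n_inhabited A) as [a Ha], (pi_n_inhabited B) as [b Hb], (pi_n_inhabited C) as [c Hc].
  apply (pi_n_eq _ _ _ _ (pmul_mem _ _ _ _ Ha (pmul_mem _ _ _ _ Hb Hc))
                         (pmul_mem _ _ _ _ (pmul_mem _ _ _ _ Ha Hb) Hc)).
  apply homotopic_sym, concat_assoc_homotopic; apply proj2_sig.
Qed.

Lemma pmul1p (A : pi_n X x0 n) : pmul X x0 n (pe X x0 n) A = A.
Proof.
  destruct (pi_n_inhabited A) as [a Ha].
  apply (pi_n_eq _ _ _ _ (pmul_mem _ _ _ _ pe_mem Ha) Ha), concat_const_l_homotopic, proj2_sig.
Qed.

Lemma pmulp1 (A : pi_n X x0 n) : pmul X x0 n A (pe X x0 n) = A.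
Proof.
  destruct (pi_n_inhabited A) as [a Ha].
  apply (pi_n_eq _ _ _ _ (pmul_mem _ _ _ _ Ha pe_mem) Ha), concat_const_r_homotopic, proj2_sig.
Qed.

Lemma pmulVp (A : pi_n X x0 n) : pmul X x0 n (pinv X x0 n A) A = pe X x0 n.
Proof.
  destruct (pi_n_inhabited A) as [a Ha].
  apply (pi_n_eq _ _ _ _ (pmul_mem _ _ _ _ (pinv_mem _ _ Ha) Ha) pe_mem).
  apply concat_reverse_l_homotopic, proj2_sig.
Qed.

Lemma pmulpV (A : pi_n X x0 n) : pmul X x0 n A (pinv X x0 n A) = pe X x0 n.
Proof.
  destruct (pi_n_inhabited A) as [a Ha].
  apply (pi_n_eq _ _ _ _ (pmul_mem _ _ _ _ Ha (pinv_mem _ _ Ha)) pe_mem).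
  apply concat_reverse_r_homotopic, proj2_sig.
Qed.

(** * The pseudometric [rho] *)

Definition unif_close (r : R) (A B : pi_n X x0 n) : Prop :=
  exists a b, proj1_sig A a /\ proj1_sig B b /\
    exists m, m < r /\ forall t, dist X (proj1_sig a t) (proj1_sig b t) <= m.

Lemma rho_ball_iff A r B : rho_ball X x0 n A r B <-> unif_close r A B.
Proof.
  unfold rho_ball, rho; rewrite Rbar_glb_lt; split.
  - intros [x [[a [b [Ha [Hb ->]]]] Hlt]]; unfold mu in Hlt; rewrite Rbar_lub_lt in Hlt.
    destruct Hlt as [m [Hm Hbound]]; exists a, b; repeat split; auto.
    exists m; split; [exact Hm |]; intros t; exact (Hbound _ (ex_intro _ t eq_refl)).
  - intros [a [b [Ha [Hb [m [Hm Hbound]]]]]]; exists (mu X x0 n a b); split; [exists a, b; auto |].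
    unfold mu; rewrite Rbar_lub_lt; exists m; split; [exact Hm |].
    intros x [t ->]; apply Hbound.
Qed.

Lemma rho_ball_refl A r : 0 < r -> rho_ball X x0 n A r A.
Proof.
  intros Hr; rewrite rho_ball_iff; destruct (pi_n_inhabited A) as [a Ha].
  exists a, a; repeat split; auto; exists 0; split; [exact Hr |].
  intros t; rewrite (proj2 (dist_refl X _ _) eq_refl); lra.
Qed.

Lemma rho_ball_mul A A' B B' r : rho_ball X x0 n A r A' -> rho_ball X x0 n B r B' ->
  rho_ball X x0 n (pmul X x0 n A B) r (pmul X x0 n A' B').
Proof.
  rewrite !rho_ball_iff; intros [a [a' [Ha [Ha' [m [Hm Hd]]]]]] [b [b' [Hb [Hb' [k [Hk He]]]]]].
  exists (Omega_concat a b), (Omega_concat a' b'); repeat split; try apply pmul_mem; auto.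
  exists (Rmax m k); split; [apply Rmax_lub_lt; auto |]; intros t; simpl; unfold concat.
  destruct Rle_dec; [eapply Rle_trans; [apply Hd | apply Rmax_l]
                   | eapply Rle_trans; [apply He | apply Rmax_r]].
Qed.

Lemma rho_ball_inv A A' r :
  rho_ball X x0 n A r A' -> rho_ball X x0 n (pinv X x0 n A) r (pinv X x0 n A').
Proof.
  rewrite !rho_ball_iff; intros [a [a' [Ha [Ha' [m [Hm Hd]]]]]].
  exists (Omega_reverse a), (Omega_reverse a'); repeat split; try apply pinv_mem; auto.
  exists m; split; [exact Hm |]; intros t; apply Hd.
Qed.

Lemma pi_n_topological_group :
  is_topological_group (pmul X x0 n) (pinv X x0 n) (pe X x0 n) (rho_open X x0 n).
Proof.
  exact (ball_topological_group _ _ _ _ _ pmulA pmul1p pmulp1 pmulVp pmulpV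
           rho_ball_refl rho_ball_mul rho_ball_inv).
Qed.

Lemma rho_ball_open_normal_subgroup r : 0 < r ->
  is_open_normal_subgroup (pmul X x0 n) (pinv X x0 n) (pe X x0 n) (rho_open X x0 n)
    (rho_ball X x0 n (pe X x0 n) r).
Proof.
  exact (ball_open_normal_subgroup _ _ _ _ _ pmulA pmul1p pmulp1 pmulVp pmulpV
           rho_ball_refl rho_ball_mul rho_ball_inv r).
Qed.

End Loops.

Theorem proposition4p6 (X : Metric_Space) (x0 : Base X) (n : nat) (hn : (1 <= n)%nat) :
  (* the group law on pi_n is the usual one: [a][b] = [a+b], [a]^-1 = [reverse a] *)
  (forall a b : pi_n X x0 n,
      proj1_sig (pmul X x0 n a b) = mulc X x0 n (proj1_sig a) (proj1_sig b)) /\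
  (forall a : pi_n X x0 n, proj1_sig (pinv X x0 n a) = invc X x0 n (proj1_sig a)) /\
  is_topological_group (pmul X x0 n) (pinv X x0 n) (pe X x0 n) (rho_open X x0 n) /\
  (forall r, 0 < r ->
     is_open_normal_subgroup (pmul X x0 n) (pinv X x0 n) (pe X x0 n) (rho_open X x0 n)
       (rho_ball X x0 n (pe X x0 n) r)).
Proof.
  split; [exact (pmul_val n hn X x0) |].
  split; [exact (pinv_val n hn X x0) |].
  split; [exact (pi_n_topological_group n hn X x0) |].
  exact (rho_ball_open_normal_subgroup n hn X x0).
Qed.
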